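(* Let $f:\mathbb{R}^n\times\mathbb{R}^m\to\mathbb{R}$ be twice continuously differentiable, $\mu$-strongly convex in $x$ and $\mu$-strongly concave in $y$ ($\mu>0$), with the largest singular value of $\nabla F(z)$ at most $L$ for all $z$ and $\|\nabla F(z)-\nabla F(z')\|\le L_2\|z-z'\|$, where $z=(x;y)$ and $F(z)=(\nabla_x f(x,y);-\nabla_y f(x,y))$. Let $m(z)=\frac12\|F(z)\|^2$, and for a starting point $z^0$ let $D=\max\{\|z-z^0\|: m(z)\le m(z^0)\}$ and $L_m=L^2+L_2LD$. Let $\{z^k\}$ be generated by the CRN-SPP method (described in the context) with constant stepsize $\alpha=\frac{\mu^2}{2L_m}<1$. Then for every $k$, $$m(z^{k+1})-m(z^k)\le-\frac{\mu^4}{8L_m}\|d^k\|^2.$$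
   Context: CRN-SPP with parameters $\bar\gamma>0$, $\rho,\alpha\in(0,1)$: at iterate $z^k=(x^k;y^k)$ let $g^k=\nabla f(z^k)$, $H^k=\nabla^2 f(z^k)$ and for $\gamma>0$ define $f_k(x,y;\gamma)=f(z^k)+\langle g^k,z-z^k\rangle+\frac12(z-z^k)^\top H^k(z-z^k)+\frac{\gamma}{3}\|x-x^k\|^3-\frac{\gamma}{3}\|y-y^k\|^3$. Set $\gamma^k=\bar\gamma$, compute the saddle point $(\tilde x,\tilde y)$ of $\min_x\max_y f_k(x,y;\gamma^k)$, and let $u^k=\tilde x-x^k$, $v^k=\tilde y-y^k$; while $\gamma^k(\|u^k\|+\|v^k\|)>\mu$, replace $\gamma^k$ by $\rho\gamma^k$ and recompute. Set $d^k=(u^k;v^k)$, and $z^{k+1}=z^k+\alpha d^k$ if $m(z^k+\alpha d^k)<m(z^k+d^k)$, otherwise $z^{k+1}=z^k+d^k$. Norms: Euclidean for vectors, largest singular value for matrices. *)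

From HB Require Import structures.
From mathcomp Require Import all_boot all_order all_algebra.
From mathcomp Require Import all_classical all_reals all_analysis.
Set Implicit Arguments. Unset Strict Implicit. Unset Printing Implicit Defensive.
Import Order.TTheory GRing.Theory Num.Theory.
Import numFieldNormedType.Exports.
Local Open Scope ring_scope.

Section Defs.
Variable R : realType.

Definition dotv (p : nat) (u v : 'cV[R]_p) : R := \sum_(i < p) u i 0 * v i 0.
Definition normE (p : nat) (v : 'cV[R]_p) : R := Num.sqrt (dotv v v).

(* ||A v|| <= c ||v|| for all v, i.e. the largest singular value
   (spectral / induced 2-norm) of A is at most c. *)
Definition specnorm_le (p q : nat) (A : 'M[R]_(p, q)) (c : R) : Prop :=
  forall v : 'cV[R]_q, normE (A *m v) <= c * normE v.

Variables n m : nat.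
Notation V := 'cV[R]_(n + m).

Definition has_gradient (f : V -> R) (g : V -> V) : Prop :=
  forall z, differentiable f z /\ forall h, 'd f z h = dotv (g z) h.

Definition has_jacobian (g : V -> V) (H : V -> 'M[R]_(n + m)) : Prop :=
  forall z, differentiable g z /\ forall h, 'd g z h = H z *m h.

Definition strongly_convex_x (mu : R) (f : V -> R) : Prop :=
  forall (y : 'cV[R]_m) (x1 x2 : 'cV[R]_n) (t : R), 0 <= t <= 1 ->
    f (col_mx (t *: x1 + (1 - t) *: x2) y)
      <= t * f (col_mx x1 y) + (1 - t) * f (col_mx x2 y)
         - mu / 2 * t * (1 - t) * normE (x1 - x2) ^+ 2.

Definition strongly_concave_y (mu : R) (f : V -> R) : Prop :=
  forall (x : 'cV[R]_n) (y1 y2 : 'cV[R]_m) (t : R), 0 <= t <= 1 ->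
    f (col_mx x (t *: y1 + (1 - t) *: y2))
      >= t * f (col_mx x y1) + (1 - t) * f (col_mx x y2)
         + mu / 2 * t * (1 - t) * normE (y1 - y2) ^+ 2.

Definition Fop (g : V -> V) (z : V) : V :=
  col_mx (usubmx (g z)) (- dsubmx (g z)).
Definition JF (H : V -> 'M[R]_(n + m)) (z : V) : 'M[R]_(n + m) :=
  col_mx (usubmx (H z)) (- dsubmx (H z)).

Definition merit (g : V -> V) (z : V) : R := 2^-1 * normE (Fop g z) ^+ 2.

Definition is_level_max (g : V -> V) (z0 : V) (D : R) : Prop :=
  (exists z, merit g z <= merit g z0 /\ normE (z - z0) = D) /\
  (forall z, merit g z <= merit g z0 -> normE (z - z0) <= D).

Definition crn_model (f : V -> R) (g : V -> V) (H : V -> 'M[R]_(n + m))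
    (zk : V) (gam : R) (w : V) : R :=
  f zk + dotv (g zk) (w - zk) + 2^-1 * dotv (w - zk) (H zk *m (w - zk))
  + gam / 3 * normE (usubmx (w - zk)) ^+ 3
  - gam / 3 * normE (dsubmx (w - zk)) ^+ 3.

Definition is_saddle (phi : 'cV[R]_n -> 'cV[R]_m -> R)
    (xs : 'cV[R]_n) (ys : 'cV[R]_m) : Prop :=
  forall x y, phi xs y <= phi xs ys /\ phi xs ys <= phi x ys.

Definition crn_dir (f : V -> R) (g : V -> V) (H : V -> 'M[R]_(n + m))
    (zk : V) (gam : R) (d : V) : Prop :=
  is_saddle (fun x y => crn_model f g H zk gam (col_mx x y))
    (usubmx (zk + d)) (dsubmx (zk + d)).

(* One iteration of CRN-SPP: gamma^k = gbar * rho^j with j the first index for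
   which gamma (||u|| + ||v||) <= mu, then the (alpha vs 1) step choice. *)
Definition crn_step (f : V -> R) (g : V -> V) (H : V -> 'M[R]_(n + m))
    (mu gbar rho alpha : R) (zk zk1 dk : V) : Prop :=
  exists j : nat,
    crn_dir f g H zk (gbar * rho ^+ j) dk /\
    gbar * rho ^+ j * (normE (usubmx dk) + normE (dsubmx dk)) <= mu /\
    (forall i : nat, (i < j)%N -> forall d' : V,
        crn_dir f g H zk (gbar * rho ^+ i) d' ->
        mu < gbar * rho ^+ i * (normE (usubmx d') + normE (dsubmx d'))) /\
    zk1 = (if merit g (zk + alpha *: dk) < merit g (zk + dk)
           then zk + alpha *: dk else zk + dk).

End Defs.

(* The saddle point d = (u; v) of the cubic model satisfies the first-order condition
   F(z) + ∇F(z) d + γ (‖u‖ u; ‖v‖ v) = 0 (this uses the symmetry of the Hessian of f).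
   Writing (‖u‖ u; ‖v‖ v) = λ d + δ S d with S = diag(I, -I), the stepsize rule gives
   γ|δ| ≤ γλ ≤ μ/2, and the coercivity ⟨e, ∇F e⟩ ≥ μ‖e‖² inherited from strong
   convexity-concavity then yields ⟨F(z), ∇F(z) d⟩ ≤ -μ²‖d‖².  On the other hand
     m(z + s d) ≤ m(z) + s ⟨F(z), ∇F(z) d⟩ + s² (L² + L₂‖F(z)‖) ‖d‖² / 2,
   and ‖F(z)‖ ≤ L D on the level set, because F vanishes at a minimiser of m, which lies
   in that set.  With α = μ²/(2 L_m) the step α d therefore decreases m by at least
   α μ² ‖d‖² / 4 = μ⁴ ‖d‖² / (8 L_m), the accepted step does no worse, and by induction
   every iterate stays in the level set. *)

From HB Require Import structures.
From mathcomp Require Import all_boot all_order all_algebra.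
From mathcomp Require Import all_classical all_reals all_analysis.
From mathcomp Require Import ring lra.
Import Order.TTheory GRing.Theory Num.Theory.
Import numFieldNormedType.Exports.
Local Open Scope ring_scope.

Set Implicit Arguments. Unset Strict Implicit. Unset Printing Implicit Defensive.

Section Euclidean.
Variable R : realType.
Implicit Types (p : nat).

Lemma dotvC p (u v : 'cV[R]_p) : dotv u v = dotv v u.
Proof. by apply: eq_bigr => i _; rewrite mulrC. Qed.

Lemma dotvDl p (u w v : 'cV[R]_p) : dotv (u + w) v = dotv u v + dotv w v.
Proof. by rewrite /dotv -big_split; apply: eq_bigr => i _; rewrite mxE mulrDl. Qed.

Lemma dotvZl p a (u v : 'cV[R]_p) : dotv (a *: u) v = a * dotv u v.
Proof. by rewrite /dotv mulr_sumr; apply: eq_bigr => i _; rewrite mxE mulrA. Qed.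

Lemma dotvNl p (u v : 'cV[R]_p) : dotv (- u) v = - dotv u v.
Proof. by rewrite -scaleN1r dotvZl mulN1r. Qed.

Lemma dotvBl p (u w v : 'cV[R]_p) : dotv (u - w) v = dotv u v - dotv w v.
Proof. by rewrite dotvDl dotvNl. Qed.

Lemma dotvDr p (u w v : 'cV[R]_p) : dotv v (u + w) = dotv v u + dotv v w.
Proof. by rewrite dotvC dotvDl !(dotvC v). Qed.

Lemma dotvZr p a (u v : 'cV[R]_p) : dotv v (a *: u) = a * dotv v u.
Proof. by rewrite dotvC dotvZl dotvC. Qed.

Lemma dotvNr p (u v : 'cV[R]_p) : dotv v (- u) = - dotv v u.
Proof. by rewrite dotvC dotvNl dotvC. Qed.

Lemma dotvBr p (u w v : 'cV[R]_p) : dotv v (u - w) = dotv v u - dotv v w.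
Proof. by rewrite dotvDr dotvNr. Qed.

Lemma dotv0l p (v : 'cV[R]_p) : dotv 0 v = 0.
Proof. by rewrite -(scale0r 0) dotvZl mul0r. Qed.

Lemma dotv0r p (v : 'cV[R]_p) : dotv v 0 = 0.
Proof. by rewrite dotvC dotv0l. Qed.

Lemma dotv_col p1 p2 (a c : 'cV[R]_p1) (b d : 'cV[R]_p2) :
  dotv (col_mx a b) (col_mx c d) = dotv a c + dotv b d.
Proof.
by rewrite /dotv big_split_ord /=; congr (_ + _); apply: eq_bigr => i _;
  rewrite ?col_mxEu ?col_mxEd.
Qed.

Lemma dotvv_ge0 p (v : 'cV[R]_p) : 0 <= dotv v v.
Proof. by apply: sumr_ge0 => i _; rewrite -expr2 sqr_ge0. Qed.

Lemma dotvv_eq0 p (v : 'cV[R]_p) : dotv v v = 0 -> v = 0.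
Proof.
move=> /eqP; rewrite psumr_eq0; last by move=> i _; rewrite -expr2 sqr_ge0.
move=> /allP v0; apply/matrixP => i j; rewrite (ord1 j) mxE.
by have := v0 i (mem_index_enum _); rewrite -expr2 sqrf_eq0 => /eqP.
Qed.

Lemma normE_ge0 p (v : 'cV[R]_p) : 0 <= normE v.
Proof. exact: sqrtr_ge0. Qed.

Lemma sqr_normE p (v : 'cV[R]_p) : normE v ^+ 2 = dotv v v.
Proof. by rewrite sqr_sqrtr // dotvv_ge0. Qed.

Lemma normE_eq0 p (v : 'cV[R]_p) : normE v = 0 -> v = 0.
Proof. by move=> v0; apply: dotvv_eq0; rewrite -sqr_normE v0 expr0n. Qed.

Lemma normE0 p : normE (0 : 'cV[R]_p) = 0.
Proof. by rewrite /normE dotv0l sqrtr0. Qed.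

Lemma normE_gt0 p (v : 'cV[R]_p) : v != 0 -> 0 < normE v.
Proof. by move=> v0; rewrite lt_def normE_ge0 andbT; apply: contra v0 => /eqP/normE_eq0->. Qed.

Lemma normEZ p a (v : 'cV[R]_p) : normE (a *: v) = `|a| * normE v.
Proof. by rewrite /normE dotvZl dotvZr mulrA -expr2 sqrtrM ?sqr_ge0 // sqrtr_sqr. Qed.

Lemma normEN p (v : 'cV[R]_p) : normE (- v) = normE v.
Proof. by rewrite -scaleN1r normEZ normrN1 mul1r. Qed.

Lemma normE_distC p (u v : 'cV[R]_p) : normE (u - v) = normE (v - u).
Proof. by rewrite -normEN opprB. Qed.

Lemma sqr_normE_col p1 p2 (a : 'cV[R]_p1) (b : 'cV[R]_p2) :
  normE (col_mx a b) ^+ 2 = normE a ^+ 2 + normE b ^+ 2.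
Proof. by rewrite !sqr_normE dotv_col. Qed.

Lemma normE_le p (u : 'cV[R]_p) c : 0 <= c -> dotv u u <= c ^+ 2 -> normE u <= c.
Proof. by move=> c0 uc; rewrite /normE -(ger0_norm c0) -sqrtr_sqr ler_sqrt // sqr_ge0. Qed.

Lemma normr_entry_le p (v : 'cV[R]_p) i : `|v i 0| <= normE v.
Proof.
rewrite -sqrtr_sqr ler_sqrt ?dotvv_ge0 // /dotv (bigD1 i) //= -expr2 lerDl.
by apply: sumr_ge0 => j _; rewrite -expr2 sqr_ge0.
Qed.

Lemma dotv_sqr_le p (u v : 'cV[R]_p) : dotv u v ^+ 2 <= dotv u u * dotv v v.
Proof.
have [v0|vv0] := eqVneq (dotv v v) 0.
  by rewrite (dotvv_eq0 v0) dotv0r dotv0l expr0n mulr0.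
have vpos : 0 < dotv v v by rewrite lt_def vv0 dotvv_ge0.
set t := dotv u v / dotv v v.
have tE : t * dotv v v = dotv u v by rewrite /t divfK.
have := dotvv_ge0 (u - t *: v).
rewrite !(dotvBl, dotvBr, dotvZl, dotvZr) (dotvC v u) => uv.
have := mulr_ge0 (ltW vpos) uv.
move: tE vpos; set X := dotv u v; set Y := dotv v v; nra.
Qed.

Lemma normr_dotv_le p (u v : 'cV[R]_p) : `|dotv u v| <= normE u * normE v.
Proof.
rewrite -sqrtr_sqr /normE -sqrtrM ?dotvv_ge0 //.
by rewrite ler_sqrt ?mulr_ge0 ?dotvv_ge0 // dotv_sqr_le.
Qed.

Lemma dotv_le p (u v : 'cV[R]_p) : dotv u v <= normE u * normE v.
Proof. exact: le_trans (ler_norm _) (normr_dotv_le u v). Qed.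

Lemma ler_normED p (u v : 'cV[R]_p) : normE (u + v) <= normE u + normE v.
Proof.
apply: normE_le; first by rewrite addr_ge0 ?normE_ge0.
rewrite !(dotvDl, dotvDr) (dotvC v u) sqrrD !sqr_normE.
have := dotv_le u v; lra.
Qed.

Lemma ler_normEB p (u v : 'cV[R]_p) : normE (u - v) <= normE u + normE v.
Proof. by rewrite -(normEN v) ler_normED. Qed.

End Euclidean.

Section BlockSign.
Variables (R : realType) (n m : nat).
Local Notation V := 'cV[R]_(n + m).

(* The block matrix S = diag(I_n, -I_m): F = S (grad f) and nabla F = S (Hess f). *)
Definition negy (v : V) : V := col_mx (usubmx v) (- dsubmx v).

Lemma dotv_negy (u v : V) : dotv (negy u) v = dotv u (negy v).
Proof. by rewrite /negy -[v in LHS]vsubmxK -[u in RHS]vsubmxK !dotv_col dotvNl dotvNr. Qed.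

Lemma negyK : involutive negy.
Proof. by move=> v; rewrite /negy col_mxKu col_mxKd opprK vsubmxK. Qed.

Lemma normE_negy (v : V) : normE (negy v) = normE v.
Proof. by rewrite /normE dotv_negy negyK. Qed.

Lemma negyD (u v : V) : negy (u + v) = negy u + negy v.
Proof. by rewrite /negy add_col_mx; congr col_mx; rewrite ?linearD //= opprD. Qed.

Lemma negyZ a (v : V) : negy (a *: v) = a *: negy v.
Proof. by rewrite /negy scale_col_mx; congr col_mx; rewrite ?linearZ //= scalerN. Qed.

Lemma negyB (u v : V) : negy (u - v) = negy u - negy v.
Proof. by rewrite negyD -scaleN1r negyZ scaleN1r. Qed.

Lemma FopE (g : V -> V) z : Fop g z = negy (g z).
Proof. by []. Qed.

Lemma JF_mulmx (H : V -> 'M[R]_(n + m)) z (e : V) : JF H z *m e = negy (H z *m e).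
Proof.
rewrite /JF /negy mul_col_mx mulNmx -[H z in RHS]vsubmxK mul_col_mx.
by rewrite col_mxKu col_mxKd.
Qed.

Lemma merit_dotv (g : V -> V) z : merit g z = 2^-1 * dotv (g z) (g z).
Proof. by rewrite /merit sqr_normE FopE dotv_negy negyK. Qed.

End BlockSign.

Section RealCalculus.
Variable R : realType.

Lemma is_derive_dotv p (psi phi : R -> 'cV[R]_p) (t : R) psi' phi' :
  is_derive t 1 psi psi' -> is_derive t 1 phi phi' ->
  is_derive t 1 (fun s => dotv (psi s) (phi s)) (dotv psi' (phi t) + dotv (psi t) phi').
Proof.
have entry (chi : R -> 'cV[R]_p) chi' i : is_derive t 1 chi chi' ->
    is_derive t 1 (fun s => chi s i 0) (chi' i 0).
  move=> [dchi <-]; split; first exact: (derivable_mxP chi t 1).1 dchi i 0.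
  by rewrite derive_mx // mxE.
move=> dpsi dphi.
have E : (fun s => dotv (psi s) (phi s)) =
    \sum_(i < p) ((fun s => psi s i 0) * (fun s => phi s i 0)).
  by rewrite fct_sumE; apply/funext => s.
rewrite E; apply: is_derive_eq
  (is_derive_sum (fun i => is_deriveM (entry _ _ i dpsi) (entry _ _ i dphi))) _.
rewrite /dotv -big_split /=; apply: eq_bigr => i _ /=.
by rewrite addrC; congr (_ + _) => //; rewrite mulrC.
Qed.

Lemma is_derive_along p (W : normedModType R) (k : 'cV[R]_p -> W) z e (t : R) :
  derivable k (z + t *: e) e ->
  is_derive t 1 (fun s => k (z + s *: e)) ('D_e k (z + t *: e)).
Proof.
have E : (fun h : R => h^-1 *: (((fun s => k (z + s *: e)) \o shift t) (h *: 1)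
             - k (z + t *: e))) =
         (fun h : R => h^-1 *: ((k \o shift (z + t *: e)) (h *: e) - k (z + t *: e))).
  apply/funext => h /=; congr (_ *: (k _ - _)).
  by rewrite [h *: 1]mulr1 scalerDl addrCA addrC.
by move=> dk; split; [rewrite /derivable E | rewrite /derive E].
Qed.

Lemma is_derive_mulr_const (c t : R) : is_derive t 1 (fun s : R => s * c) c.
Proof.
have -> : (fun s : R => s * c) = c *: id by apply/funext => s; rewrite /= mulrC.
by apply: is_derive_eq (is_deriveZ c (is_derive_id t 1)) _; rewrite /GRing.scale /= mulr1.
Qed.

Lemma is_derive_sqr_mulr_const (c t : R) : is_derive t 1 (fun s : R => s ^+ 2 * c) (2 * t * c).
Proof.
have -> : (fun s : R => s ^+ 2 * c) = (fun s : R => s * c) * id.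
  by apply/funext => s; rewrite /= expr2 mulrAC.
apply: is_derive_eq (is_deriveM (is_derive_mulr_const c t) (is_derive_id t 1)) _.
by rewrite /GRing.scale /=; lra.
Qed.

Lemma within_continuous_of_is_derive (phi phi' : R -> R) (a b : R) :
  (forall s : R, is_derive s 1 phi (phi' s)) -> {within `[a, b], continuous phi}%classic.
Proof. by move=> dphi; apply: derivable_within_continuous => x _; case: (dphi x). Qed.

Lemma ler_of_is_derive_le0 (phi phi' : R -> R) (a b : R) :
  a <= b -> (forall s : R, is_derive s 1 phi (phi' s)) ->
  (forall s, a < s < b -> phi' s <= 0) -> phi b <= phi a.
Proof.
move=> ab dphi phi'_le0.
apply: (@ler0_derive1_le_cc _ phi a b) => //.
- move=> x xab; rewrite derive1E; have [_ ->] := dphi x.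
  by apply: phi'_le0; rewrite in_itv /= in xab.
- exact: within_continuous_of_is_derive dphi.
- by rewrite in_itv /= lexx ab.
- by rewrite in_itv /= lexx ab.
Qed.

Lemma is_derive0_le (phi : R -> R) (l B C d : R) :
  is_derive (0 : R) 1 phi l -> phi 0 = 0 -> 0 < d ->
  (forall t, 0 < t < d -> phi t <= t * B + t ^+ 2 * C) -> l <= B.
Proof.
move=> [dphi <-] phi0 d0 phi_le.
apply/ler_addgt0Pr => eps e0.
rewrite ['D_1 phi 0]cvg_at_rightE; last exact: dphi.
apply: limr_le.
  rewrite -(cvg_at_rightE (fun h : R => h^-1 *: ((phi \o shift 0) _ - phi 0))) //.
  apply: cvg_trans dphi; apply: cvg_app.
  move=> A [e egt0 Ae]; exists e => // x xe xgt0; apply: Ae => //.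
  exact/lt0r_neq0.
set r := Num.min d (eps / (`|C| + 1)).
have r0 : 0 < r by rewrite lt_min d0 divr_gt0 // ltr_wpDl.
near=> h.
have /andP [h0 hr] : 0 < h < r.
  near: h; exists r => //= y; rewrite /ball /= sub0r normrN => yr y0.
  by rewrite y0 /= (le_lt_trans (ler_norm _) yr).
move: hr; rewrite lt_min => /andP [hd hr].
have he : h * (`|C| + 1) < eps by rewrite -ltr_pdivlMr ?ltr_wpDl.
rewrite /= phi0 subr0 [h *: 1]mulr1 addr0 /GRing.scale /= ler_pdivrMl //.
have phih : phi h <= h * B + h ^+ 2 * C by apply: phi_le; rewrite h0 hd.
apply: le_trans phih _.
have : h ^+ 2 * C <= h * eps.
  apply: le_trans (_ : h ^+ 2 * `|C| <= _); first by rewrite ler_pM2l ?exprn_gt0 // ler_norm.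
  rewrite expr2 -mulrA ler_pM2l //; nra.
nra.
Unshelve. all: by end_near. Qed.

Lemma ge0_of_quadratic_ge0 (A C : R) :
  (forall t, 0 < t < 1 -> 0 <= t * A + t ^+ 2 * C) -> 0 <= A.
Proof.
move=> quad_ge0; rewrite leNgt; apply/negP => A0.
set t := Num.min 2^-1 (- A / (2 * (`|C| + 1))).
have C1 : 0 < `|C| + 1 by rewrite ltr_wpDl.
have t0 : 0 < t by rewrite lt_min invr_gt0 ltr0n /= divr_gt0 // ?oppr_gt0 // mulr_gt0.
have t1 : t < 1 by rewrite gt_min invf_lt1 ?ltr1n.
have tC : t * (2 * (`|C| + 1)) <= - A.
  by rewrite -ler_pdivlMr ?mulr_gt0 // ge_min lexx orbT.
have := quad_ge0 t; rewrite t0 t1 => /(_ isT).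
have := ler_norm C; have := normr_ge0 C.
nra.
Qed.

Lemma eq_of_normrB_le (x y C : R) :
  (forall e, 0 < e -> `|x - y| <= e * C) -> x = y.
Proof.
move=> small; apply/eqP; rewrite -subr_eq0 -normr_le0.
apply/ler_addgt0Pr => e e0; rewrite add0r.
have C1 : 0 < `|C| + 1 by rewrite ltr_wpDl.
apply: le_trans (small _ (divr_gt0 e0 C1)) _.
rewrite mulrAC ler_pdivrMr // ler_pM2l //.
by apply: le_trans (ler_norm C) _; rewrite lerDl.
Qed.

End RealCalculus.

Section DerivativesAlongLines.
Variables (R : realType) (n m : nat).
Local Notation V := 'cV[R]_(n + m).
Variables (f : V -> R) (g : V -> V) (H : V -> 'M[R]_(n + m)).
Hypothesis hg : has_gradient f g.
Hypothesis hH : has_jacobian g H.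

Lemma is_derive_f_along z e (t : R) :
  is_derive t 1 (fun s => f (z + s *: e)) (dotv (g (z + t *: e)) e).
Proof.
have [df dfE] := hg (z + t *: e).
by rewrite -dfE -deriveE //; apply: is_derive_along; exact: diff_derivable.
Qed.

Lemma is_derive_g_along z e (t : R) :
  is_derive t 1 (fun s => g (z + s *: e)) (H (z + t *: e) *m e).
Proof.
have [dg dgE] := hH (z + t *: e).
by rewrite -dgE -deriveE //; apply: is_derive_along; exact: diff_derivable.
Qed.

Lemma is_derive_dotv_g_along z e a (t : R) :
  is_derive t 1 (fun s => dotv (g (z + s *: e)) a) (dotv (H (z + t *: e) *m e) a).
Proof.
apply: is_derive_eq (is_derive_dotv (is_derive_g_along z e t) (is_derive_cst a t 1)) _.
by rewrite dotv0r addr0.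
Qed.

Lemma is_derive_dotv_F_along z e a (t : R) :
  is_derive t 1 (fun s => dotv (Fop g (z + s *: e)) a) (dotv (JF H (z + t *: e) *m e) a).
Proof.
have -> : (fun s => dotv (Fop g (z + s *: e)) a) = (fun s => dotv (g (z + s *: e)) (negy a)).
  by apply/funext => s; rewrite FopE dotv_negy.
by apply: is_derive_eq (is_derive_dotv_g_along z e (negy a) t) _; rewrite JF_mulmx dotv_negy.
Qed.

Lemma is_derive_merit_along z e (t : R) :
  is_derive t 1 (fun s => merit g (z + s *: e))
    (dotv (Fop g (z + t *: e)) (JF H (z + t *: e) *m e)).
Proof.
have -> : (fun s => merit g (z + s *: e)) =
    2^-1 *: (fun s => dotv (g (z + s *: e)) (g (z + s *: e))).
  by apply/funext => s; rewrite merit_dotv.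
apply: is_derive_eq.
  exact: is_deriveZ _ (is_derive_dotv (is_derive_g_along z e t) (is_derive_g_along z e t)).
rewrite JF_mulmx FopE dotv_negy negyK (dotvC (H _ *m e)).
by rewrite /GRing.scale /=; field.
Qed.

End DerivativesAlongLines.

Section StrongMonotonicity.
Variables (R : realType) (n m : nat).
Local Notation V := 'cV[R]_(n + m).
Variables (f : V -> R) (g : V -> V) (H : V -> 'M[R]_(n + m)) (mu : R).
Hypothesis hg : has_gradient f g.
Hypothesis hH : has_jacobian g H.
Hypothesis hsc : strongly_convex_x mu f.
Hypothesis hscc : strongly_concave_y mu f.

Let is_derive_f_increment z e :
  is_derive (0 : R) 1 (fun t => f (z + t *: e) - f z) (dotv (g z) e).
Proof.
change (is_derive (0 : R) 1 ((fun t => f (z + t *: e)) - cst (f z)) (dotv (g z) e)).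
have dcst := is_derive_cst (f z) (0 : R) (1 : R).
apply: is_derive_eq (is_deriveB (is_derive_f_along hg z e 0) dcst) _.
by rewrite scale0r addr0 subr0.
Qed.

Lemma strongly_convex_x_grad (y : 'cV[R]_m) (x1 x2 : 'cV[R]_n) :
  dotv (g (col_mx x2 y)) (col_mx (x1 - x2) 0)
  <= f (col_mx x1 y) - f (col_mx x2 y) - mu / 2 * normE (x1 - x2) ^+ 2.
Proof.
set z := col_mx x2 y; set e := col_mx (x1 - x2) (0 : 'cV[R]_m).
apply: (is_derive0_le (C := mu / 2 * normE (x1 - x2) ^+ 2)
    (is_derive_f_increment z e) _ ltr01).
  by rewrite scale0r addr0 subrr.
move=> t /andP [t0 t1].
have -> : z + t *: e = col_mx (t *: x1 + (1 - t) *: x2) y.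
  rewrite /z /e scale_col_mx add_col_mx scaler0 addr0; congr col_mx.
  by rewrite scalerBr scalerBl scale1r addrCA addrC.
have := hsc y x1 x2 (t := t); rewrite (ltW t0) (ltW t1) -/z => /(_ isT).
set N := normE _ ^+ 2; set A := f (col_mx x1 y); set B := f z => conv.
nra.
Qed.

Lemma strongly_concave_y_grad (x : 'cV[R]_n) (y1 y2 : 'cV[R]_m) :
  f (col_mx x y1) - f (col_mx x y2) + mu / 2 * normE (y1 - y2) ^+ 2
  <= dotv (g (col_mx x y2)) (col_mx 0 (y1 - y2)).
Proof.
set z := col_mx x y2; set e := col_mx (0 : 'cV[R]_n) (y1 - y2).
rewrite -lerN2.
have dphi : is_derive (0 : R) 1 (fun t => - (f (z + t *: e) - f z)) (- dotv (g z) e).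
  exact: is_deriveN (is_derive_f_increment z e).
apply: (is_derive0_le (C := mu / 2 * normE (y1 - y2) ^+ 2) dphi _ ltr01).
  by rewrite scale0r addr0 subrr oppr0.
move=> t /andP [t0 t1].
have -> : z + t *: e = col_mx x (t *: y1 + (1 - t) *: y2).
  rewrite /z /e scale_col_mx add_col_mx scaler0 addr0; congr col_mx.
  by rewrite scalerBr scalerBl scale1r addrCA addrC.
have := hscc x y1 y2 (t := t); rewrite (ltW t0) (ltW t1) -/z => /(_ isT).
set N := normE _ ^+ 2; set A := f (col_mx x y1); set B := f z => conc.
nra.
Qed.

Lemma Fop_strongly_monotone (a b : V) :
  mu * normE (a - b) ^+ 2 <= dotv (Fop g a - Fop g b) (a - b).
Proof.
rewrite !FopE -negyB dotv_negy -[a]vsubmxK -[b]vsubmxK.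
set xa := usubmx a; set ya := dsubmx a; set xb := usubmx b; set yb := dsubmx b.
have h1 := strongly_convex_x_grad ya xb xa.
have h2 := strongly_convex_x_grad yb xa xb.
have h3 := strongly_concave_y_grad xa yb ya.
have h4 := strongly_concave_y_grad xb ya yb.
have -> : col_mx xa ya - col_mx xb yb = col_mx (xa - xb) (ya - yb).
  by rewrite opp_col_mx add_col_mx.
have -> : negy (col_mx (xa - xb) (ya - yb)) = col_mx (xa - xb) 0 + col_mx 0 (yb - ya).
  by rewrite /negy col_mxKu col_mxKd add_col_mx addr0 add0r opprB.
rewrite sqr_normE_col !(dotvBl, dotvDr).
have E1 : col_mx (xb - xa) (0 : 'cV[R]_m) = - col_mx (xa - xb) 0.
  by rewrite opp_col_mx oppr0 opprB.
have E2 : col_mx (0 : 'cV[R]_n) (ya - yb) = - col_mx 0 (yb - ya).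
  by rewrite opp_col_mx oppr0 opprB.
rewrite E1 dotvNr (normE_distC xb) in h1; rewrite E2 dotvNr in h4.
rewrite (normE_distC yb) in h3.
lra.
Qed.

Lemma JF_coercive z (e : V) : mu * normE e ^+ 2 <= dotv e (JF H z *m e).
Proof.
rewrite -lerN2.
pose phi t := - (dotv (Fop g (z + t *: e)) e - dotv (Fop g z) e).
have dphi : is_derive (0 : R) 1 phi (- dotv e (JF H z *m e)).
  have dF := is_derive_dotv_F_along hH z e e 0.
  have dcst := is_derive_cst (dotv (Fop g z) e) (0 : R) (1 : R).
  apply: is_derive_eq (is_deriveN (is_deriveB dF dcst)) _.
  by rewrite subr0 scale0r addr0 dotvC.
apply: (is_derive0_le (B := - (mu * normE e ^+ 2)) (C := 0) dphi _ ltr01).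
  by rewrite /phi scale0r addr0 subrr oppr0.
move=> t /andP [t0 _].
have := Fop_strongly_monotone (z + t *: e) z.
rewrite addrAC subrr add0r normEZ dotvZr ger0_norm ?(ltW t0) // dotvBl /phi.
set X := dotv (Fop g (z + t *: e)) e - dotv (Fop g z) e.
set N := normE e => mono.
have : mu * t * N ^+ 2 <= X by rewrite -(ler_pM2l t0); nra.
nra.
Qed.

End StrongMonotonicity.

Section MatrixEntries.
Variable R : realType.

Lemma normr_mx_entry_le p q (M : 'M[R]_(p, q)) i j : `|M i j| <= `|M|.
Proof. by rewrite [leRHS]/Num.Def.normr /= mx_normrE; exact: (le_bigmax _ _ (i, j)). Qed.

Definition sum_abs_outer p q (a : 'cV[R]_p) (b : 'cV[R]_q) : R :=
  \sum_(i < p) \sum_(j < q) `|a i 0| * `|b j 0|.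

Lemma sum_abs_outer_ge0 p q (a : 'cV[R]_p) (b : 'cV[R]_q) : 0 <= sum_abs_outer a b.
Proof. by apply: sumr_ge0 => i _; apply: sumr_ge0 => j _; rewrite mulr_ge0. Qed.

Lemma normr_dotv_mulmx_le p q (M : 'M[R]_(q, p)) (a : 'cV[R]_q) (b : 'cV[R]_p) :
  `|dotv (M *m b) a| <= `|M| * sum_abs_outer a b.
Proof.
rewrite /dotv /sum_abs_outer mulr_sumr.
apply: le_trans (ler_norm_sum _ _ _) _; apply: ler_sum => i _.
rewrite normrM mxE.
apply: le_trans (ler_wpM2r (normr_ge0 _) (ler_norm_sum _ _ _)) _.
rewrite mulr_suml mulr_sumr; apply: ler_sum => j _.
rewrite normrM -mulrA [`|b j 0| * _]mulrC.
by apply: ler_wpM2r; [rewrite mulr_ge0 | exact: normr_mx_entry_le].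
Qed.

End MatrixEntries.

Section HessianSymmetry.
Variables (R : realType) (n m : nat).
Local Notation V := 'cV[R]_(n + m).
Variables (f : V -> R) (g : V -> V) (H : V -> 'M[R]_(n + m)).
Hypothesis hg : has_gradient f g.
Hypothesis hH : has_jacobian g H.
Hypothesis cH : continuous H.

Lemma second_difference_mvt z a b (s : R) : 0 < s ->
  exists th sg : R, [/\ 0 < th < s, 0 < sg < s &
  (f (z + s *: b + s *: a) - f (z + s *: a)) - (f (z + s *: b) - f z) =
    s * (s * dotv (H (z + th *: a + sg *: b) *m b) a)].
Proof.
move=> s0.
pose rho tau := f (z + s *: b + tau *: a) - f (z + tau *: a).
pose rho' tau := dotv (g (z + s *: b + tau *: a)) a - dotv (g (z + tau *: a)) a.
have drho (tau : R) : is_derive tau 1 rho (rho' tau).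
  exact: is_deriveB (is_derive_f_along hg (z + s *: b) a tau) (is_derive_f_along hg z a tau).
have [th] := MVT s0 (fun x _ => drho x) (within_continuous_of_is_derive drho).
rewrite in_itv /= => /andP [th0 ths].
rewrite /rho /rho' !scale0r !addr0 subr0 => Eth.
pose kap sg := dotv (g (z + th *: a + sg *: b)) a.
pose kap' sg := dotv (H (z + th *: a + sg *: b) *m b) a.
have dkap (sg : R) : is_derive sg 1 kap (kap' sg).
  exact: is_derive_dotv_g_along hH (z + th *: a) b a sg.
have [sg] := MVT s0 (fun x _ => dkap x) (within_continuous_of_is_derive dkap).
rewrite in_itv /= => /andP [sg0 sgs].
rewrite /kap /kap' scale0r addr0 subr0 => Esg.
exists th, sg; split; rewrite ?th0 ?ths ?sg0 ?sgs //.
by rewrite Eth [z + s *: b + th *: a]addrAC Esg; ring.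
Qed.

(* Both mixed second differences of [f] equal [s^2] times a Hessian entry at a point
   within [O(s)] of [z], so continuity of [H] lets [s] go to 0. *)
Lemma hessian_symmetric z a b : dotv (H z *m b) a = dotv (H z *m a) b.
Proof.
apply: (eq_of_normrB_le (C := sum_abs_outer a b + sum_abs_outer b a)) => eps e0.
have [r r0 Hr] : exists2 r : R, 0 < r & forall x, `|z - x| < r -> `|H z - H x| < eps.
  have := @cH z; move/cvgrPdist_lt/(_ eps e0); case/nbhs_ballP => r r0 Hr.
  by exists r => // x zx; apply: Hr; rewrite -ball_normE /ball_ /=.
set s := r / (`|a| + `|b| + 1).
have ab1 : 0 < `|a| + `|b| + 1 by rewrite ltr_wpDl // addr_ge0.
have s0 : 0 < s by rewrite divr_gt0.
have sE : s * (`|a| + `|b| + 1) = r by rewrite /s divfK // gt_eqF.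
have near_z (th sg : R) (u v : V) : 0 < th < s -> 0 < sg < s ->
    `|u| + `|v| = `|a| + `|b| -> `|H z - H (z + th *: u + sg *: v)| < eps.
  move=> /andP [th0 ths] /andP [sg0 sgs] nuv; apply: Hr.
  rewrite -addrA opprD addrA subrr sub0r normrN.
  apply: le_lt_trans (ler_normD _ _) _.
  rewrite !normrZ !ger0_norm ?ltW //.
  have := normr_ge0 a; have := normr_ge0 b; have := normr_ge0 u; have := normr_ge0 v; nra.
have [th [sg [ths sgs E1]]] := second_difference_mvt z a b s0.
have [th' [sg' [ths' sgs' E2]]] := second_difference_mvt z b a s0.
have E : dotv (H (z + th *: a + sg *: b) *m b) a = dotv (H (z + th' *: b + sg' *: a) *m a) b.
  apply: (mulfI (lt0r_neq0 s0)); apply: (mulfI (lt0r_neq0 s0)).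
  by rewrite -E1 -E2 [z + s *: a + s *: b]addrAC; ring.
have B1 := normr_dotv_mulmx_le (H z - H (z + th *: a + sg *: b)) a b.
have B2 := normr_dotv_mulmx_le (H z - H (z + th' *: b + sg' *: a)) b a.
rewrite mulmxBl dotvBl E in B1; rewrite mulmxBl dotvBl in B2.
have l1 := ler_wpM2r (sum_abs_outer_ge0 a b) (ltW (near_z _ _ _ _ ths sgs erefl)).
have l2 := ler_wpM2r (sum_abs_outer_ge0 b a) (ltW (near_z _ _ _ _ ths' sgs' (addrC _ _))).
set X1 := dotv (H z *m b) a in B1 *; set X2 := dotv (H z *m a) b in B2 *.
set Y := dotv _ b in B1 B2.
rewrite mulrDr.
apply: le_trans (_ : `|X1 - Y| + `|X2 - Y| <= _); last first.
  by apply: lerD; [apply: le_trans B1 l1 | apply: le_trans B2 l2].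
have -> : X1 - X2 = (X1 - Y) - (X2 - Y) by ring.
exact: ler_normB.
Qed.

End HessianSymmetry.

Section CubeIncrement.
Variable R : realType.

(* [N = |u|], [N' = |u + t e|], [s = <u, e>], [E = |e|]. *)
Lemma sqr_mul_increment_le (N N' t s E : R) : 0 <= N -> 0 <= N' -> 0 <= t ->
  N' ^+ 2 = N ^+ 2 + 2 * t * s + t ^+ 2 * E ^+ 2 ->
  `|s| <= N * E -> `|N' - N| <= t * E ->
  N ^+ 2 * (N' - N) - t * N * s <= 2 * N * t ^+ 2 * E ^+ 2.
Proof.
move=> N0 N'0 t0 sqE hs hd.
have [->|Nneq0] := eqVneq N 0; first by rewrite !(expr0n, mul0r, mulr0, subr0).
have Npos : 0 < N by rewrite lt_def Nneq0 N0.
rewrite -(ler_pM2l (ltr_wpDl N'0 Npos)).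
have -> : (N' + N) * (N ^+ 2 * (N' - N) - t * N * s) =
    t * N * s * (N - N') + N ^+ 2 * t ^+ 2 * E ^+ 2.
  have -> : (N' + N) * (N ^+ 2 * (N' - N) - t * N * s) =
            N ^+ 2 * (N' ^+ 2 - N ^+ 2) - t * N * s * (N' + N) by ring.
  by rewrite sqE; ring.
have : t * N * s * (N - N') <= t * N * (N * E) * (t * E).
  apply: le_trans (ler_norm _) _.
  rewrite !normrM (ger0_norm t0) (ger0_norm N0) distrC.
  have := ler_wpM2l (mulr_ge0 t0 N0) (ler_pM (normr_ge0 s) (normr_ge0 _) hs hd).
  by rewrite !mulrA.
have := mulr_ge0 N'0 (mulr_ge0 (mulr_ge0 N0 (sqr_ge0 t)) (sqr_ge0 E)).
nra.
Qed.

Lemma cube_increment_le (N N' t s E : R) :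
  0 <= N -> 0 <= N' -> 0 <= E -> 0 <= t -> t <= 1 ->
  N' ^+ 2 = N ^+ 2 + 2 * t * s + t ^+ 2 * E ^+ 2 ->
  `|s| <= N * E -> `|N' - N| <= t * E ->
  N' ^+ 3 - N ^+ 3 - 3 * t * N * s <= t ^+ 2 * (E ^+ 2 * (5 * N + E)).
Proof.
move=> N0 N'0 E0 t0 t1 sqE hs hd.
have -> : N' ^+ 3 - N ^+ 3 - 3 * t * N * s =
   (N ^+ 2 * (N' - N) - t * N * s) + 2 * t * s * (N' - N) + t ^+ 2 * E ^+ 2 * N'.
  by rewrite exprS sqE; ring.
have h1 := sqr_mul_increment_le N0 N'0 t0 sqE hs hd.
have h2 : 2 * t * s * (N' - N) <= 2 * t ^+ 2 * N * E ^+ 2.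
  have : `|s * (N' - N)| <= N * E * (t * E) by rewrite normrM; apply: ler_pM.
  move=> /(le_trans (ler_norm _)) /(ler_wpM2l (mulr_ge0 (ler0n _ 2) t0)) sN.
  nra.
have h3 : t ^+ 2 * E ^+ 2 * N' <= t ^+ 2 * E ^+ 2 * (N + E).
  apply: ler_wpM2l; first by rewrite mulr_ge0 // sqr_ge0.
  have : N' - N <= t * E by exact: le_trans (ler_norm _) hd.
  nra.
nra.
Qed.

Lemma cubic_term_le p (gam t : R) (u e : 'cV[R]_p) : 0 <= gam -> 0 <= t -> t <= 1 ->
  gam / 3 * (normE (u + t *: e) ^+ 3 - normE u ^+ 3)
  <= t * (gam * normE u * dotv u e)
     + t ^+ 2 * (gam / 3 * (normE e ^+ 2 * (5 * normE u + normE e))).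
Proof.
move=> gam0 t0 t1.
have : normE (u + t *: e) ^+ 3 - normE u ^+ 3 - 3 * t * normE u * dotv u e
    <= t ^+ 2 * (normE e ^+ 2 * (5 * normE u + normE e)).
  apply: cube_increment_le => //; rewrite ?normE_ge0 //.
  - by rewrite !sqr_normE !(dotvDl, dotvDr, dotvZl, dotvZr) (dotvC e u); ring.
  - by rewrite (le_trans (normr_dotv_le u e)) // ger0_norm // mulr_ge0 ?normE_ge0.
  - rewrite ler_norml; apply/andP; split.
      by have := ler_normEB (u + t *: e) (t *: e); rewrite addrK normEZ ger0_norm //; lra.
    by have := ler_normED u (t *: e); rewrite normEZ ger0_norm //; lra.
move=> /(ler_wpM2l (divr_ge0 gam0 (ler0n _ 3))) cube.
lra.
Qed.

End CubeIncrement.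

Section CubicModelSaddle.
Variables (R : realType) (n m : nat).
Local Notation V := 'cV[R]_(n + m).
Variables (f : V -> R) (g : V -> V) (H : V -> 'M[R]_(n + m)).
Hypothesis hg : has_gradient f g.
Hypothesis hH : has_jacobian g H.
Hypothesis cH : continuous H.
Variables (zk d : V) (gam : R).
Hypothesis gam_ge0 : 0 <= gam.
Hypothesis hd : crn_dir f g H zk gam d.

Local Notation u := (usubmx d).
Local Notation v := (dsubmx d).
Local Notation model := (crn_model f g H zk gam).

Lemma crn_model_increment (E : V) (t : R) :
  model (zk + d + t *: E) - model (zk + d) =
  t * dotv (g zk + H zk *m d) E + t ^+ 2 * (2^-1 * dotv E (H zk *m E))
  + gam / 3 * (normE (u + t *: usubmx E) ^+ 3 - normE u ^+ 3)
  - gam / 3 * (normE (v + t *: dsubmx E) ^+ 3 - normE v ^+ 3).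
Proof.
rewrite /crn_model.
have -> : zk + d + t *: E - zk = d + t *: E.
  by apply/eqP; rewrite subr_eq [d + _ + zk]addrC addrA.
have -> : zk + d - zk = d by rewrite addrC addKr.
have -> : u + t *: usubmx E = usubmx (d + t *: E) by rewrite linearD linearZ.
have -> : v + t *: dsubmx E = dsubmx (d + t *: E) by rewrite linearD linearZ.
rewrite mulmxDr -scalemxAr !(dotvDl, dotvDr, dotvZl, dotvZr).
rewrite (dotvC d (H zk *m E)) (hessian_symmetric hg hH cH zk d E) (dotvC E (H zk *m d)).
set X := normE (usubmx _) ^+ 3; set Y := normE (dsubmx _) ^+ 3; lra.
Qed.

Let col_shift_u (e : 'cV[R]_n) (t : R) :
  col_mx (usubmx (zk + d) + t *: e) (dsubmx (zk + d)) = zk + d + t *: col_mx e 0.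
Proof. by rewrite -{3}(vsubmxK (zk + d)) scale_col_mx add_col_mx scaler0 addr0. Qed.

Let col_shift_v (e : 'cV[R]_m) (t : R) :
  col_mx (usubmx (zk + d)) (dsubmx (zk + d) + t *: e) = zk + d + t *: col_mx 0 e.
Proof. by rewrite -{3}(vsubmxK (zk + d)) scale_col_mx add_col_mx scaler0 addr0. Qed.

Lemma crn_dir_stationary_x_ge (e : 'cV[R]_n) :
  0 <= dotv (g zk + H zk *m d) (col_mx e 0) + gam * normE u * dotv u e.
Proof.
set E := col_mx e (0 : 'cV[R]_m).
apply: (ge0_of_quadratic_ge0 (C := 2^-1 * dotv E (H zk *m E) +
    gam / 3 * (normE e ^+ 2 * (5 * normE u + normE e)))).
move=> t /andP [t0 t1].
have [_] := hd (usubmx (zk + d) + t *: e) (dsubmx (zk + d)).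
rewrite /= vsubmxK col_shift_u -subr_ge0 crn_model_increment.
rewrite col_mxKu col_mxKd scaler0 addr0 subrr mulr0 subr0.
have := cubic_term_le u e gam_ge0 (ltW t0) (ltW t1).
lra.
Qed.

Lemma crn_dir_stationary_y_ge (e : 'cV[R]_m) :
  0 <= - dotv (g zk + H zk *m d) (col_mx 0 e) + gam * normE v * dotv v e.
Proof.
set E := col_mx (0 : 'cV[R]_n) e.
apply: (ge0_of_quadratic_ge0 (C := - (2^-1 * dotv E (H zk *m E)) +
    gam / 3 * (normE e ^+ 2 * (5 * normE v + normE e)))).
move=> t /andP [t0 t1].
have [+ _] := hd (usubmx (zk + d)) (dsubmx (zk + d) + t *: e).
rewrite /= vsubmxK col_shift_v -subr_ge0 -opprB crn_model_increment.
rewrite col_mxKu col_mxKd scaler0 addr0 subrr mulr0 addr0.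
have := cubic_term_le v e gam_ge0 (ltW t0) (ltW t1).
lra.
Qed.

Lemma crn_dir_optimality :
  Fop g zk + JF H zk *m d + gam *: col_mx (normE u *: u) (normE v *: v) = 0.
Proof.
set r := g zk + H zk *m d.
have -> : Fop g zk + JF H zk *m d = negy r by rewrite JF_mulmx FopE negyD.
rewrite /negy scale_col_mx add_col_mx !scalerA.
set q1 := usubmx r + _; set q2 := - dsubmx r + _.
have rE : r = col_mx (usubmx r) (dsubmx r) by rewrite vsubmxK.
have q1_orth e : dotv q1 e = 0.
  have := crn_dir_stationary_x_ge e; have := crn_dir_stationary_x_ge (- e).
  have -> : col_mx (- e) (0 : 'cV[R]_m) = - col_mx e 0 by rewrite opp_col_mx oppr0.
  rewrite -/r !dotvNr {1 2}rE !dotv_col !dotv0r !addr0 /q1 dotvDl dotvZl.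
  lra.
have q2_orth e : dotv q2 e = 0.
  have := crn_dir_stationary_y_ge e; have := crn_dir_stationary_y_ge (- e).
  have -> : col_mx (0 : 'cV[R]_n) (- e) = - col_mx 0 e by rewrite opp_col_mx oppr0.
  rewrite -/r !dotvNr {1 2}rE !dotv_col !dotv0r !add0r /q2 dotvDl dotvZl dotvNl.
  lra.
by rewrite (dotvv_eq0 (q1_orth q1)) (dotvv_eq0 (q2_orth q2)) col_mx0.
Qed.

End CubicModelSaddle.

Section MeritUpperBound.
Variables (R : realType) (n m : nat).
Local Notation V := 'cV[R]_(n + m).
Variables (g : V -> V) (H : V -> 'M[R]_(n + m)) (L L2 : R).
Hypothesis hH : has_jacobian g H.
Hypothesis hL : forall w, specnorm_le (JF H w) L.
Hypothesis hL2 : forall w w', specnorm_le (JF H w - JF H w') (L2 * normE (w - w')).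

Lemma Fop_lipschitz (a b : V) : normE (Fop g b - Fop g a) <= L * normE (b - a).
Proof.
set r := Fop g b - Fop g a; set e := b - a.
pose c := L * normE e * normE r.
pose phi s := dotv (Fop g (a + s *: e)) r - s * c.
have dphi (s : R) : is_derive s 1 phi (dotv (JF H (a + s *: e) *m e) r - c).
  exact: is_deriveB (is_derive_dotv_F_along hH a e r s) (is_derive_mulr_const c s).
have := @ler_of_is_derive_le0 _ phi _ 0 1 ler01 dphi.
have phi'_le0 (s : R) : 0 < s < 1 -> dotv (JF H (a + s *: e) *m e) r - c <= 0.
  move=> _; rewrite subr_le0 /c; apply: le_trans (dotv_le _ _) _.
  by apply: ler_wpM2r; [exact: normE_ge0 | exact: hL].
move=> /(_ phi'_le0).
rewrite /phi scale1r scale0r addr0 mul0r subr0 mul1r.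
have -> : a + e = b by rewrite /e addrC subrK.
rewrite lerBlDr -lerBlDl -dotvBl -/r -sqr_normE /c => rr.
have [r0|rpos] := eqVneq (normE r) 0.
  by rewrite r0; apply: le_trans (hL a e); exact: normE_ge0.
have rp : 0 < normE r by rewrite lt_def rpos normE_ge0.
by rewrite -(ler_pM2r rp) -expr2.
Qed.

Lemma merit_le_quadratic z e (s0 : R) : 0 <= s0 ->
  merit g (z + s0 *: e) <= merit g z + s0 * dotv (Fop g z) (JF H z *m e)
     + s0 ^+ 2 * (2^-1 * ((L ^+ 2 + L2 * normE (Fop g z)) * normE e ^+ 2)).
Proof.
move=> s00.
set h0 := dotv (Fop g z) (JF H z *m e).
set c := 2^-1 * ((L ^+ 2 + L2 * normE (Fop g z)) * normE e ^+ 2).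
pose psi s := merit g (z + s *: e) - s * h0 - s ^+ 2 * c.
have dpsi (s : R) : is_derive s 1 psi
    (dotv (Fop g (z + s *: e)) (JF H (z + s *: e) *m e) - h0 - 2 * s * c).
  exact: is_deriveB (is_deriveB (is_derive_merit_along hH z e s) (is_derive_mulr_const h0 s))
    (is_derive_sqr_mulr_const c s).
have := @ler_of_is_derive_le0 _ psi _ 0 s0 s00 dpsi.
have psi'_le0 (s : R) : 0 < s < s0 ->
    dotv (Fop g (z + s *: e)) (JF H (z + s *: e) *m e) - h0 - 2 * s * c <= 0.
  move=> /andP [s_gt0 _].
  set Fs := Fop g (z + s *: e); set Js := JF H (z + s *: e).
  have step_len : normE (z + s *: e - z) = s * normE e.
    by rewrite addrAC subrr add0r normEZ (ger0_norm (ltW s_gt0)).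
  have -> : dotv Fs (Js *m e) - h0 =
      dotv (Fs - Fop g z) (Js *m e) + dotv (Fop g z) ((Js - JF H z) *m e).
    by rewrite /h0 dotvBl mulmxBl dotvBr; lra.
  have b1 : dotv (Fs - Fop g z) (Js *m e) <= L * (s * normE e) * (L * normE e).
    apply: le_trans (dotv_le _ _) _.
    apply: ler_pM; rewrite ?normE_ge0 //; last exact: hL.
    by rewrite -step_len; apply: Fop_lipschitz.
  have b2 : dotv (Fop g z) ((Js - JF H z) *m e) <=
            normE (Fop g z) * (L2 * (s * normE e) * normE e).
    apply: le_trans (dotv_le _ _) _.
    by apply: ler_wpM2l; [exact: normE_ge0 | rewrite -step_len; apply: hL2].
  rewrite /c; have := normE_ge0 e; have := normE_ge0 (Fop g z).
  nra.
move=> /(_ psi'_le0).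
rewrite /psi scale0r addr0 mul0r expr0n /= mul0r !subr0.
lra.
Qed.

End MeritUpperBound.

Lemma trmx_continuous (R : realType) p q : continuous (fun A : 'M[R]_(p, q) => A^T).
Proof.
move=> A; apply/(cvgrPdist_lt (FF := nbhs_filter A)) => eps e0.
apply/nbhs_ballP; exists eps => // B; rewrite -ball_normE /ball_ /=.
apply: le_lt_trans; rewrite -linearB /= [leLHS]/Num.Def.normr /= mx_normrE.
apply: bigmax_le => [|ij _]; first exact: normr_ge0.
by rewrite mxE; exact: normr_mx_entry_le.
Qed.

Section LevelSet.
Variables (R : realType) (n m : nat).
Local Notation V := 'cV[R]_(n + m).
Variables (f : V -> R) (g : V -> V) (H : V -> 'M[R]_(n + m)) (mu L L2 D : R) (z0 : V).
Hypothesis hg : has_gradient f g.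
Hypothesis hH : has_jacobian g H.
Hypothesis mu_gt0 : 0 < mu.
Hypothesis hsc : strongly_convex_x mu f.
Hypothesis hscc : strongly_concave_y mu f.
Hypothesis hL : forall w, specnorm_le (JF H w) L.
Hypothesis hL2 : forall w w', specnorm_le (JF H w - JF H w') (L2 * normE (w - w')).
Hypothesis hD : is_level_max g z0 D.

Lemma merit_continuous : continuous (merit g).
Proof.
have cg : continuous g by move=> z; exact: differentiable_continuous (hH z).1.
have -> : merit g = (fun z => 2^-1 * \sum_(i < n + m) (g z i 0 * g z i 0)).
  by apply/funext => z; rewrite merit_dotv.
move=> z.
change ({for z, continuous ((cst 2^-1) \* (fun z => \sum_(i < n + m) (g z i 0 * g z i 0)))}).
apply: continuousM; first exact: cst_continuous.
apply: (continuous_big (op := +%R) (x0 := 0)); first exact: add_continuous.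
move=> i _ w.
change ({for w, continuous ((fun z => g z i 0) \* (fun z => g z i 0))}).
by apply: continuousM; exact: (continuous_comp (@cg w) (@coord_continuous _ _ _ i 0 _)).
Qed.

(* The sublevel set [merit g <= merit g z0] is closed and, by the definition of [D],
   bounded; it is compact once transported to row vectors. *)
Lemma merit_has_min : exists zs, forall w, merit g zs <= merit g w.
Proof.
have [_ level_le] := hD.
pose psi (r : 'rV[R]_(n + m)) := merit g r^T.
pose A := [set r | psi r <= merit g z0]%classic.
have cpsi : continuous psi.
  by move=> x; exact: continuous_comp (@trmx_continuous R 1 (n + m) x) (@merit_continuous x^T).
have A0 : (A !=set0)%classic by exists z0^T; rewrite /A /psi /= trmxK.
have cA : compact A.
  apply: bounded_closed_compact; last first.
    exact: (continuous_closedP psi).1 cpsi _ (closed_le (y := merit g z0)).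
  exists (D + `|z0|); split; first exact: num_real.
  move=> M DM r Ar.
  have rD : normE (r^T - z0) <= D by exact: level_le.
  rewrite /= [leLHS]/Num.Def.normr /= mx_normrE.
  apply: bigmax_le => [|ij _].
    by apply: le_trans (ltW DM); rewrite addr_ge0 // (le_trans (normE_ge0 _) rD).
  have -> : `|r ij.1 ij.2| = `|(r^T - z0) ij.2 0 + z0 ij.2 0|.
    by rewrite !mxE subrK (ord1 ij.1).
  apply: le_trans (ler_normD _ _) _; apply: ltW; apply: le_lt_trans DM.
  by apply: lerD; [exact: le_trans (normr_entry_le _ _) rD | exact: normr_mx_entry_le].
have [c cA' cmin] := compact_EVT_min A0 cA (continuous_subspaceT cpsi).
exists c^T => w; have [wz0|z0w] := leP (merit g w) (merit g z0).
  by have := cmin w^T; rewrite inE /A /psi /= !trmxK; apply.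
by rewrite inE /A /= in cA'; exact: le_trans cA' (ltW z0w).
Qed.

(* Moving from a minimiser along [-F] would decrease the merit to second order. *)
Lemma Fop_eq0_of_merit_min zs : (forall w, merit g zs <= merit g w) -> Fop g zs = 0.
Proof.
move=> zs_min; apply: normE_eq0.
set F := Fop g zs; set N := normE F.
apply/eqP; rewrite eq_le normE_ge0 andbT leNgt; apply/negP => N_gt0.
set K := 2^-1 * (L ^+ 2 + L2 * N).
set s := mu / (`|K| + 1).
have K1 : 0 < `|K| + 1 by rewrite ltr_wpDl.
have s_gt0 : 0 < s by rewrite divr_gt0.
have sK : s * (`|K| + 1) = mu by rewrite /s divfK // gt_eqF.
have := merit_le_quadratic hH hL hL2 zs (- F) (ltW s_gt0).
rewrite normEN -/F -/N mulmxN dotvNr.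
have coer := ler_wpM2l (ltW s_gt0) (JF_coercive hg hH hsc hscc zs F).
have := zs_min (zs + s *: - F).
have : 0 < s ^+ 2 * N ^+ 2 by rewrite mulr_gt0 // exprn_gt0.
rewrite -sK -/N in coer; set X := dotv F _ in coer |- * => sN_gt0 min_le quad_le.
have KsN : s ^+ 2 * N ^+ 2 * K <= s ^+ 2 * N ^+ 2 * `|K|.
  by apply: ler_wpM2l; [exact: ltW | exact: ler_norm].
have quadE : s ^+ 2 * (2^-1 * ((L ^+ 2 + L2 * N) * N ^+ 2)) = s ^+ 2 * N ^+ 2 * K.
  by rewrite /K; ring.
rewrite quadE in quad_le; nra.
Qed.

Hypothesis L_ge0 : 0 <= L.

Lemma normE_Fop_le_level z : merit g z <= merit g z0 -> normE (Fop g z) <= L * D.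
Proof.
move=> zz0; have [_ level_le] := hD.
have [zs zs_min] := merit_has_min.
have Fzs := Fop_eq0_of_merit_min zs_min.
have zsD : normE (zs - z0) <= D.
  by apply: level_le; apply: zs_min.
have Fz0 : normE (Fop g z0) <= L * D.
  have := Fop_lipschitz hH hL zs z0; rewrite Fzs subr0 normE_distC => Fz0.
  exact: le_trans Fz0 (ler_wpM2l L_ge0 zsD).
apply: le_trans Fz0.
move: zz0; rewrite /merit => zz0.
have := normE_ge0 (Fop g z); have := normE_ge0 (Fop g z0).
nra.
Qed.

End LevelSet.

(* [P = |p|], [Nd = |d|], [Dp = <d, p>], [Sp = <S d, p>] for the step [d] and [p = nabla F d]. *)
Lemma descent_estimate (R : realFieldType) (mu P Nd Dp Sp r tau : R) :
  0 < mu -> 0 <= Nd -> `|tau| <= r -> 2 * r <= mu ->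
  mu * Nd ^+ 2 <= Dp -> `|Sp| <= Nd * P -> mu * Nd <= P ->
  - P ^+ 2 - r * Dp - tau * Sp <= - (mu ^+ 2 * Nd ^+ 2).
Proof.
move=> mu_gt0 Nd0 tau_r r_mu hDp hSp hP.
have r0 : 0 <= r := le_trans (normr_ge0 tau) tau_r.
have s1 : - (r * Dp) <= - (r * (mu * Nd ^+ 2)) by rewrite lerN2 ler_wpM2l.
have s2 : - (tau * Sp) <= `|tau| * (Nd * P).
  apply: le_trans (_ : `|tau * Sp| <= _); first by rewrite -normrN ler_norm.
  by rewrite normrM; apply: ler_wpM2l.
have s3 : `|tau| * (mu * Nd ^+ 2) <= r * (mu * Nd ^+ 2).
  by apply: ler_wpM2r => //; rewrite mulr_ge0 ?sqr_ge0 ?ltW.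
have s4 : `|tau| * Nd * (P - mu * Nd) <= (mu / 2) * Nd * (P - mu * Nd).
  apply: ler_wpM2r; first by rewrite subr_ge0.
  by apply: ler_wpM2r => //; lra.
have muNd0 : 0 <= mu * Nd by apply: mulr_ge0 => //; exact: ltW.
have : 0 <= (P - mu * Nd) * (P + mu * Nd / 2).
  by rewrite mulr_ge0 ?subr_ge0 // addr_ge0 ?divr_ge0 // (le_trans muNd0 hP).
lra.
Qed.

Section Descent.
Variables (R : realType) (n m : nat).
Local Notation V := 'cV[R]_(n + m).
Variables (f : V -> R) (g : V -> V) (H : V -> 'M[R]_(n + m)) (mu : R).
Hypothesis hg : has_gradient f g.
Hypothesis hH : has_jacobian g H.
Hypothesis mu_gt0 : 0 < mu.
Hypothesis hsc : strongly_convex_x mu f.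
Hypothesis hscc : strongly_concave_y mu f.

Lemma col_normE_scale_decomp (d : V) :
  col_mx (normE (usubmx d) *: usubmx d) (normE (dsubmx d) *: dsubmx d) =
  ((normE (usubmx d) + normE (dsubmx d)) / 2) *: d
  + ((normE (usubmx d) - normE (dsubmx d)) / 2) *: negy d.
Proof.
rewrite /negy; set u := usubmx d; set v := dsubmx d.
rewrite -{1}[d]vsubmxK -/u -/v !scale_col_mx add_col_mx scalerN.
by congr col_mx; [rewrite -scalerDl | rewrite -scalerBl]; congr (_ *: _); lra.
Qed.

Lemma descent_direction (gam : R) zk (d : V) :
  0 <= gam -> gam * (normE (usubmx d) + normE (dsubmx d)) <= mu ->
  Fop g zk + JF H zk *m d + gam *: col_mx (normE (usubmx d) *: usubmx d)
      (normE (dsubmx d) *: dsubmx d) = 0 ->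
  dotv (Fop g zk) (JF H zk *m d) <= - (mu ^+ 2 * normE d ^+ 2).
Proof.
move=> gam0 gam_mu opt.
set p := JF H zk *m d.
set lb := (normE (usubmx d) + normE (dsubmx d)) / 2.
set dl := (normE (usubmx d) - normE (dsubmx d)) / 2.
have -> : Fop g zk = - p - gam *: (lb *: d + dl *: negy d).
  rewrite -col_normE_scale_decomp; set W := col_mx _ _.
  by rewrite -[Fop g zk](addrK (p + gam *: W)) addrA opt sub0r opprD.
rewrite !(dotvBl, dotvDl, dotvZl, dotvNl) -sqr_normE.
have Dp := JF_coercive hg hH hsc hscc zk d.
have Sp : `|dotv (negy d) p| <= normE d * normE p.
  by apply: le_trans (normr_dotv_le _ _) _; rewrite normE_negy.
have hP : mu * normE d <= normE p.
  have [->|d_neq0] := eqVneq d 0; first by rewrite normE0 mulr0 normE_ge0.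
  have d_gt0 := normE_gt0 d_neq0.
  have := le_trans Dp (dotv_le d p).
  by move=> Dp_le; rewrite -(ler_pM2l d_gt0); nra.
have nu := normE_ge0 (usubmx d); have nv := normE_ge0 (dsubmx d).
have tau_r : `|gam * dl| <= gam * lb.
  rewrite normrM (ger0_norm gam0); apply: ler_wpM2l => //.
  by rewrite /dl /lb ler_norml; apply/andP; split; lra.
have r_mu : 2 * (gam * lb) <= mu by rewrite /lb; lra.
have := descent_estimate mu_gt0 (normE_ge0 d) tau_r r_mu Dp Sp hP.
by rewrite -/p; lra.
Qed.

End Descent.

Section SpectralBounds.
Variables (R : realType) (p : nat).

Lemma specnorm_le_ge0 (A : 'M[R]_p) c (e : 'cV[R]_p) : e != 0 -> specnorm_le A c -> 0 <= c.
Proof.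
move=> e_neq0 /(_ e) Ae.
by rewrite -(pmulr_lge0 _ (normE_gt0 e_neq0)) (le_trans (normE_ge0 _) Ae).
Qed.

Lemma coercive_le_specnorm (A : 'M[R]_p) mu c (e : 'cV[R]_p) : e != 0 ->
  mu * normE e ^+ 2 <= dotv e (A *m e) -> specnorm_le A c -> mu <= c.
Proof.
move=> e_neq0 coer /(_ e) Ae.
have e_gt0 := normE_gt0 e_neq0.
rewrite -(ler_pM2r (exprn_gt0 2 e_gt0)); apply: le_trans coer _.
apply: le_trans (dotv_le _ _) _; rewrite mulrC expr2 mulrA.
by apply: ler_wpM2r; [exact: normE_ge0 | exact: Ae].
Qed.

End SpectralBounds.

Section MeritDecrease.
Variables (R : realType) (n m : nat).
Local Notation V := 'cV[R]_(n + m).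
Variables (f : V -> R) (g : V -> V) (H : V -> 'M[R]_(n + m)).
Variables (mu L L2 D gbar rho : R) (z0 : V).
Hypothesis hg : has_gradient f g.
Hypothesis hH : has_jacobian g H.
Hypothesis cH : continuous H.
Hypothesis mu_gt0 : 0 < mu.
Hypothesis hsc : strongly_convex_x mu f.
Hypothesis hscc : strongly_concave_y mu f.
Hypothesis hL : forall w, specnorm_le (JF H w) L.
Hypothesis hL2 : forall w w', specnorm_le (JF H w - JF H w') (L2 * normE (w - w')).
Hypothesis hD : is_level_max g z0 D.
Hypothesis gbar_ge0 : 0 <= gbar.
Hypothesis rho_ge0 : 0 <= rho.
Hypothesis L_ge0 : 0 <= L.
Hypothesis L2_ge0 : 0 <= L2.

Let Lm := L ^+ 2 + L2 * L * D.
Hypothesis Lm_gt0 : 0 < Lm.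
Let alpha := mu ^+ 2 / (2 * Lm).

Lemma merit_decrease zk zk1 dk :
  crn_step f g H mu gbar rho alpha zk zk1 dk -> merit g zk <= merit g z0 ->
  merit g zk1 - merit g zk <= - (mu ^+ 4 / (8 * Lm)) * normE dk ^+ 2.
Proof.
move=> [j [hdir [gam_mu [_ ->]]]] zk_level.
set gam := gbar * rho ^+ j in hdir gam_mu.
have gam_ge0 : 0 <= gam by rewrite mulr_ge0 ?exprn_ge0.
have alpha_ge0 : 0 <= alpha by rewrite divr_ge0 ?sqr_ge0 // mulr_ge0 // ltW.
have descent := descent_direction hg hH mu_gt0 hsc hscc gam_ge0 gam_mu
  (crn_dir_optimality hg hH cH gam_ge0 hdir).
have quad := merit_le_quadratic hH hL hL2 zk dk alpha_ge0.
have F_le := normE_Fop_le_level hg hH mu_gt0 hsc hscc hL hL2 hD L_ge0 zk_level.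
have step_le : merit g (if merit g (zk + alpha *: dk) < merit g (zk + dk)
    then zk + alpha *: dk else zk + dk) <= merit g (zk + alpha *: dk).
  by case: ifPn => //; rewrite -leNgt.
apply: le_trans (lerB step_le (lexx _)) _.
set Nd := normE dk in descent quad *; set h0 := dotv _ _ in descent quad.
have curv_le : L ^+ 2 + L2 * normE (Fop g zk) <= Lm.
  by rewrite lerD2l /Lm -mulrA ler_wpM2l.
have alpha_Lm : alpha * Lm = mu ^+ 2 / 2 by rewrite /alpha; field; rewrite gt_eqF.
have quad_term : alpha ^+ 2 * (2^-1 * ((L ^+ 2 + L2 * normE (Fop g zk)) * Nd ^+ 2))
    <= alpha * (mu ^+ 2 / 4) * Nd ^+ 2.
  have -> : alpha * (mu ^+ 2 / 4) * Nd ^+ 2 = alpha ^+ 2 * (2^-1 * (Lm * Nd ^+ 2)).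
    have -> : mu ^+ 2 / 4 = alpha * Lm / 2 by rewrite alpha_Lm; field.
    by ring.
  by apply: ler_wpM2l; rewrite ?sqr_ge0 // ler_wpM2l // ler_wpM2r ?sqr_ge0.
have lin_term : alpha * h0 <= alpha * - (mu ^+ 2 * Nd ^+ 2) by exact: ler_wpM2l.
have -> : mu ^+ 4 / (8 * Lm) = alpha * mu ^+ 2 / 4 by rewrite /alpha; field; rewrite gt_eqF.
have := mulr_ge0 (mulr_ge0 alpha_ge0 (sqr_ge0 mu)) (sqr_ge0 Nd).
lra.
Qed.

End MeritDecrease.

Lemma cV_eq0_or_exists_neq0 (R : realType) p :
  (forall v : 'cV[R]_p, v = 0) \/ exists e : 'cV[R]_p, e != 0.
Proof.
have [|/forallNP all0] := pselect (exists e : 'cV[R]_p, e != 0); first by right.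
by left => v; apply/eqP/negPn/negP; exact: all0.
Qed.

Lemma le_first_of_stepwise_le (R : numDomainType) (a : nat -> R) :
  (forall k, a k <= a 0%N -> a k.+1 <= a k) -> forall k, a k <= a 0%N.
Proof. by move=> step; elim=> // k le_k0; exact: le_trans (step k le_k0) le_k0. Qed.

Theorem proposition3p4 (R : realType) (n m : nat)
    (f : 'cV[R]_(n + m) -> R) (g : 'cV[R]_(n + m) -> 'cV[R]_(n + m))
    (H : 'cV[R]_(n + m) -> 'M[R]_(n + m))
    (mu L L2 D gbar rho : R) (z d : nat -> 'cV[R]_(n + m)) :
  has_gradient f g -> has_jacobian g H -> continuous H ->
  0 < mu -> strongly_convex_x mu f -> strongly_concave_y mu f ->
  (forall w, specnorm_le (JF H w) L) ->
  (forall w w', specnorm_le (JF H w - JF H w') (L2 * normE (w - w'))) ->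
  is_level_max g (z 0%N) D ->
  0 < gbar -> 0 < rho < 1 ->
  let Lm := L ^+ 2 + L2 * L * D in
  let alpha := mu ^+ 2 / (2 * Lm) in
  alpha < 1 ->
  (forall k, crn_step f g H mu gbar rho alpha (z k) (z k.+1) (d k)) ->
  forall k, merit g (z k.+1) - merit g (z k)
            <= - (mu ^+ 4 / (8 * Lm)) * normE (d k) ^+ 2.
Proof.
move=> hg hH cH mu_gt0 hsc hscc hL hL2 hD gbar_gt0 /andP [rho_gt0 _] Lm alpha _ hstep.
(* In dimension 0 nothing constrains [L], [L2], [D], but every term vanishes. *)
have [all0 k|[e e_neq0]] := cV_eq0_or_exists_neq0 R (n + m).
  by rewrite /merit (all0 (d k)) (all0 (Fop g (z k.+1))) (all0 (Fop g (z k))) normE0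
    expr0n /= !mulr0 subr0.
have mu_le_L := coercive_le_specnorm e_neq0 (JF_coercive hg hH hsc hscc 0 e) (hL 0).
have L_ge0 : 0 <= L := le_trans (ltW mu_gt0) mu_le_L.
have L2_ge0 : 0 <= L2.
  by have := specnorm_le_ge0 e_neq0 (hL2 e 0); rewrite subr0 pmulr_lge0 ?normE_gt0.
have D_ge0 : 0 <= D by have [[w [_ <-]] _] := hD; exact: normE_ge0.
have Lm_gt0 : 0 < Lm.
  by rewrite ltr_wpDr ?mulr_ge0 ?exprn_gt0 ?(lt_le_trans mu_gt0 mu_le_L).
have decrease k := merit_decrease hg hH cH mu_gt0 hsc hscc hL hL2 hD (ltW gbar_gt0)
  (ltW rho_gt0) L_ge0 L2_ge0 Lm_gt0 (hstep k).
have step k : merit g (z k) <= merit g (z 0%N) -> merit g (z k.+1) <= merit g (z k).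
  move=> /(decrease k) dec; rewrite -subr_le0; apply: le_trans dec _.
  by rewrite mulNr oppr_le0 mulr_ge0 ?sqr_ge0 // divr_ge0 ?exprn_ge0 ?mulr_ge0 ?ltW.
by move=> k; exact: decrease k (le_first_of_stepwise_le step k).
Qed.
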